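(* Assume the loss function $f(\cdot;\Xi)$ is nonnegative and $B$-Lipschitz for every $\Xi$. Let $\mathcal{D},\tilde{\mathcal{D}}$ be two samples of size $Nn$ (each consisting of $N$ local data sets of size $n$) differing in only a single example. Let $\bar{\mathbf{w}}^T,\bar{\mathbf{v}}^T$ denote the outputs of DFedAvgM after $T$ steps run on $\mathcal{D}$ and $\tilde{\mathcal{D}}$ respectively, and let $\delta_t:=\|\bar{\mathbf{w}}^t-\bar{\mathbf{v}}^t\|$. Then for every $\Xi$ and every $t_0\in\{0,1,\dots,n\}$, under the random selection rule (local samples drawn uniformly at random with replacement), $$\mathbb{E}|f(\bar{\mathbf{w}}^T;\Xi)-f(\bar{\mathbf{v}}^T;\Xi)|\le t_0(\sup f)\left(1-\left(\frac{n-1}{n}\right)^K\right)+B\,\mathbb{E}(\delta_T\mid\delta_{t_0}=0).$$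
   Context: DFedAvgM: $N$ clients connected by a graph with symmetric mixing matrix $\mathbf{M}=[m_{i,j}]$ (nonzero only on graph edges and the diagonal, all-ones vector spanning the null space of $\mathbf{I}-\mathbf{M}$, $\mathbf{I}\succeq\mathbf{M}\succ-\mathbf{I}$). Client $i$ holds local data set $\mathcal{D}_i$ of $n$ examples. In round $t$, each client performs $K$ local steps $\mathbf{w}^{t,k+1}_i=\mathbf{w}^{t,k}_i-\eta_t\nabla f_i(\mathbf{w}^{t,k}_i;\xi^{t,k}_i)+\beta(\mathbf{w}^{t,k}_i-\mathbf{w}^{t,k-1}_i)$, $k=0,\dots,K-1$, with $\mathbf{w}^{t,-1}_i=\mathbf{w}^{t,0}_i$ and $\xi^{t,k}_i$ drawn i.i.d. uniformly with replacement from $\mathcal{D}_i$, then sets $\mathbf{w}^{t+1,0}_i=\sum_\ell m_{i,\ell}\mathbf{w}^{t,K}_\ell$. The averaged iterate is $\bar{\mathbf{w}}^t=\frac1N\sum_i\mathbf{w}^{t,0}_i$ (and $\bar{\mathbf{v}}^t$ analogously for the run on $\tilde{\mathcal{D}}$). $\sup f<\infty$ denotes the uniform bound on the nonnegative loss. *)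

From HB Require Import structures.
From mathcomp Require Import all_boot all_order all_algebra.
From mathcomp Require Import all_classical all_reals all_analysis.
Set Implicit Arguments. Unset Strict Implicit. Unset Printing Implicit Defensive.
Import Order.TTheory GRing.Theory Num.Theory.
Import numFieldNormedType.Exports.
Local Open Scope ring_scope.
Local Open Scope classical_set_scope.

Section DFedAvgM.
Variables (R : realType) (d : nat) (X : Type).

Definition enorm (v : 'rV[R]_d) : R := Num.sqrt (\sum_(j < d) v 0 j ^+ 2).

Definition grad (f : 'rV[R]_d -> X -> R) (x : X) (w : 'rV[R]_d) : 'rV[R]_d :=
  \row_(j < d) 'D_(delta_mx 0 j) (fun v : 'rV[R]_d => f v x) w.

Variables (N n K : nat).
Variables (f : 'rV[R]_d -> X -> R) (M : 'M[R]_N) (eta : nat -> R) (beta : R).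

(* one selection of local sample indices for a round: client i, step k |-> index *)
Definition selection := {ffun 'I_N * 'I_K -> 'I_n}.

(* K local heavy-ball steps of client i, starting from w (with w^{t,-1} = w^{t,0}),
   on local data Di, step size et, indices given by sel. *)
Definition local_run (et : R) (Di : 'I_n -> X) (i : 'I_N) (sel : selection)
  (w : 'rV[R]_d) : 'rV[R]_d :=
  (foldl (fun (p : 'rV[R]_d * 'rV[R]_d) (k : 'I_K) =>
            (p.1 - et *: grad f (Di (sel (i, k))) p.1 + beta *: (p.1 - p.2), p.1))
         (w, w) (enum 'I_K)).1.

Definition round (D : 'I_N -> 'I_n -> X) (t : nat) (sel : selection)
  (W : 'I_N -> 'rV[R]_d) : 'I_N -> 'rV[R]_d :=
  fun i => \sum_(l < N) M i l *: local_run (eta t) (D l) l sel (W l).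

Fixpoint run_from (D : 'I_N -> 'I_n -> X) (t : nat) (W : 'I_N -> 'rV[R]_d)
  (ss : seq selection) : 'I_N -> 'rV[R]_d :=
  match ss with
  | [::] => W
  | s :: ss' => run_from D t.+1 (round D t s W) ss'
  end.

Definition wbar (D : 'I_N -> 'I_n -> X) (w0 : 'I_N -> 'rV[R]_d) (t : nat)
  (ss : seq selection) : 'rV[R]_d :=
  N%:R^-1 *: \sum_(i < N) run_from D 0 w0 (take t ss) i.

End DFedAvgM.

(* Uniform expectation over a finite sample space, and conditional expectation
   given an event A (convention: 0 if A is empty). *)
Definition Exp (R : realType) (Om : finType) (F : Om -> R) : R :=
  (#|Om|%:R)^-1 * \sum_(o : Om) F o.
Definition CondExp (R : realType) (Om : finType) (F : Om -> R) (A : pred Om) : R :=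
  (\sum_(o : Om | A o) F o) / #|A|%:R.

(* Let client i0's j0-th example be the one where the samples differ. If in
   none of the first t0 rounds client i0 draws index j0, both runs use the
   same data up to round t0, hence delta_t0 = 0. A round misses j0 with
   probability ((n-1)/n)^K (K independent uniform draws), so by the union
   bound delta_t0 <> 0 has probability at most t0 (1 - ((n-1)/n)^K), and there
   the loss gap is at most sup f because 0 <= f <= sup f. Where delta_t0 = 0
   the gap is at most B delta_T by the Lipschitz bound, and dividing the sum
   of these nonnegative terms by the size of the whole sample space instead
   of that of the event only makes it smaller. *)

From HB Require Import structures.
From mathcomp Require Import all_boot all_order all_algebra.
From mathcomp Require Import all_classical all_reals all_analysis.
From mathcomp Require Import ring lra.
Import Order.TTheory GRing.Theory Num.Theory.
Import numFieldNormedType.Exports.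
Local Open Scope ring_scope.
Local Open Scope classical_set_scope.

Lemma card_ffun_in (I S : finType) (P : pred I) (Q : pred S) :
  #|[pred g : {ffun I -> S} | [forall i in P, g i \in Q]]|
  = (#|Q| ^ #|P| * #|S| ^ #|[predC P]|)%N.
Proof.
pose F i := if P i then Q else predT.
have -> : #|[pred g : {ffun I -> S} | [forall i in P, g i \in Q]]|
          = #|(family F : simpl_pred {ffun I -> S})|.
  apply: eq_card => g; rewrite !inE.
  apply/forall_inP/familyP => [gQ i | gF i iP]; rewrite /F.
    by case: ifP => // iP; apply: gQ.
  by have := gF i; rewrite /F -[P i]/(i \in P) iP.
rewrite card_family foldrE big_map big_enum (bigID P) /=.
rewrite (eq_bigr (fun=> #|Q|)) => [|i iP]; last by rewrite /F iP.
rewrite [X in (_ * X)%N](eq_bigr (fun=> #|S|)) => [|i iP].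
  by rewrite !prod_nat_const.
by rewrite /F (negbTE iP); apply: eq_card.
Qed.

Lemma card_tuple_tnth_in (S : finType) L (t : 'I_L) (Q : pred S) :
  #|[pred o : L.-tuple S | tnth o t \in Q]| = (#|Q| * #|S| ^ L.-1)%N.
Proof.
pose psi (g : {ffun 'I_L -> S}) := [tuple g i | i < L].
have psi_bij : bijective psi.
  exists (fun o : L.-tuple S => [ffun i => tnth o i]).
    by move=> g; apply/ffunP => i; rewrite ffunE tnth_mktuple.
  by move=> o; apply: eq_from_tnth => i; rewrite tnth_mktuple ffunE.
rewrite -[LHS]sum1_card (reindex psi) /=; last exact: onW_bij.
under eq_bigl => g do rewrite inE tnth_mktuple.
have -> : (#|Q| * #|S| ^ L.-1 = #|Q| ^ #|pred1 t| * #|S| ^ #|[predC pred1 t]|)%N.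
  by rewrite card1 cardC1 card_ord.
rewrite sum1_card -card_ffun_in; apply: eq_card => g; rewrite !inE.
by apply/idP/forall_inP => [gQ i /eqP -> | gQ]; [exact: gQ | exact: (gQ t (eqxx t))].
Qed.

Lemma all_take_tnth {T : Type} {L t0 : nat} (o : L.-tuple T) (t0_le_L : (t0 <= L)%N)
    (a : pred T) :
  (forall t : 'I_t0, a (tnth o (widen_ord t0_le_L t))) -> all a (take t0 o).
Proof.
case: t0 t0_le_L => [|t0] t0_le_L a_o; first by rewrite take0.
pose x0 := tnth o (Ordinal t0_le_L).
apply/(all_nthP x0) => i; rewrite size_takel ?size_tuple // => i_lt.
by have := a_o (Ordinal i_lt); rewrite (tnth_nth x0) nth_take.
Qed.

Section UniformProbability.
Context {R : realType}.

Definition Pr {Om : finType} (A : pred Om) : R := #|A|%:R / #|Om|%:R.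

Lemma Pr_predC (Om : finType) (A : pred Om) :
  (0 < #|Om|)%N -> Pr [predC A] = 1 - Pr A.
Proof.
move=> Om_gt0; rewrite /Pr -(cardC A) natrD.
by field; rewrite -natrD cardC pnatr_eq0 -lt0n.
Qed.

Lemma Pr_ffun_in (I S : finType) (P : pred I) (Q : pred S) :
  (0 < #|S|)%N ->
  Pr [pred g : {ffun I -> S} | [forall i in P, g i \in Q]] = Pr Q ^+ #|P|.
Proof.
move=> S_gt0; rewrite /Pr card_ffun_in card_ffun -(cardC P) !natrM !natrX exprD.
by rewrite expr_div_n -mulf_div divff ?mulr1 // expf_neq0 // pnatr_eq0 -lt0n.
Qed.

Lemma Pr_tnth_in (S : finType) L (t : 'I_L) (Q : pred S) :
  Pr [pred o : L.-tuple S | tnth o t \in Q] = Pr Q.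
Proof.
have [S0 | S_gt0] := posnP #|S|.
  have Q0 : #|Q| = 0%N by apply/eqP; rewrite -leqn0 -S0 max_card.
  by rewrite /Pr card_tuple_tnth_in Q0 !mul0r.
have L_eq : L = L.-1.+1 by rewrite prednK // (leq_ltn_trans _ (ltn_ord t)).
rewrite /Pr card_tuple_tnth_in card_tuple [in X in _ / X]L_eq expnS !natrM.
by rewrite -mulf_div divff ?mulr1 // pnatr_eq0 -lt0n expn_gt0 S_gt0.
Qed.

Lemma card_le_sum (Om I : finType) (A : pred Om) (E : I -> pred Om) :
  {subset A <= [pred o | [exists i, E i o]]} -> (#|A| <= \sum_i #|E i|)%N.
Proof.
have card_ind (B : pred Om) : #|B| = (\sum_o B o)%N.
  rewrite -sum1_card big_mkcond; apply: eq_bigr => o _.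
  by rewrite unfold_in; case: (B o).
move=> A_sub; rewrite (card_ind A) (eq_bigr _ (fun i _ => card_ind (E i))).
rewrite exchange_big; apply: leq_sum => o _.
case/boolP: (A o) => // /A_sub; rewrite inE => /existsP [i Ei].
by rewrite (bigD1 i) //= Ei.
Qed.

Lemma Pr_le_sum {Om I : finType} (A : pred Om) (E : I -> pred Om) :
  {subset A <= [pred o | [exists i, E i o]]} -> Pr A <= \sum_i Pr (E i).
Proof.
move=> /card_le_sum A_le.
by rewrite /Pr -mulr_suml ler_wpM2r ?invr_ge0 // -natr_sum ler_nat.
Qed.

Lemma CondExpZl (Om : finType) (b : R) (F : Om -> R) (A : pred Om) :
  CondExp (fun o => b * F o) A = b * CondExp F A.
Proof. by rewrite /CondExp -mulr_sumr mulrA. Qed.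

Lemma Exp_le_Pr_CondExp {Om : finType} (g h : Om -> R) (A : pred Om) (U : R) :
  (forall o, ~~ A o -> g o <= U) ->
  (forall o, A o -> g o <= h o) -> (forall o, A o -> 0 <= h o) ->
  Exp g <= U * Pr [predC A] + CondExp h A.
Proof.
move=> g_le_U g_le_h h_ge0.
have inv_ge0 : 0 <= #|Om|%:R^-1 :> R by rewrite invr_ge0.
have mean_le_cond : #|Om|%:R^-1 * \sum_(o | A o) h o <= CondExp h A.
  rewrite /CondExp mulrC; have [A0 | A_gt0] := posnP #|A|.
    by rewrite big_pred0 ?mul0r // => o; apply: (card0_eq A0 o).
  rewrite ler_wpM2l ?sumr_ge0 // lef_pV2 ?posrE ?ltr0n ?ler_nat ?max_card //.
  exact: leq_trans A_gt0 (max_card _).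
rewrite /Exp (bigID A) /= mulrDr addrC; apply: lerD.
  have sum_le : \sum_(o | ~~ A o) g o <= \sum_(o in [predC A]) U by apply: ler_sum.
  apply: le_trans (ler_wpM2l inv_ge0 sum_le) _.
  by rewrite sumr_const -[U *+ _]mulr_natr /Pr mulrC -mulrA.
exact: le_trans (ler_wpM2l inv_ge0 (ler_sum _ g_le_h)) mean_le_cond.
Qed.

End UniformProbability.

Definition avoids {N n K : nat} (i0 : 'I_N) (j0 : 'I_n) (s : selection N n K) : bool :=
  [forall k, s (i0, k) != j0].

Lemma avoidsE (N n K : nat) (i0 : 'I_N) (j0 : 'I_n) :
  @avoids N n K i0 j0 =i
    [pred s : {ffun 'I_N * 'I_K -> 'I_n} |
     [forall x in [pred x : 'I_N * 'I_K | x.1 == i0], s x \in predC1 j0]].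
Proof.
move=> s; rewrite !inE; apply/forallP/forall_inP => [s_av [i k] /eqP /= -> | s_av k].
  exact: s_av.
by apply: s_av; rewrite inE.
Qed.

Lemma Pr_avoids {R : realType} (N n K : nat) (i0 : 'I_N) (j0 : 'I_n) :
  (0 < n)%N -> Pr (@avoids N n K i0 j0) = ((n%:R - 1) / n%:R) ^+ K :> R.
Proof.
move=> n_gt0.
have card_i0 : #|[pred x : 'I_N * 'I_K | x.1 == i0]| = K.
  rewrite (eq_card (B := finset.setX [set i0]%SET [set: 'I_K]%SET)) => [|x].
    by rewrite cardsX cards1 cardsT card_ord mul1n.
  by rewrite !inE andbT.
rewrite /Pr (eq_card (@avoidsE N n K i0 j0)) -/(Pr _) Pr_ffun_in ?card_ord // card_i0.
by rewrite /Pr cardC1 !card_ord -subn1 natrB.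
Qed.

Lemma enorm0 (R : realType) (d : nat) : enorm (0 : 'rV[R]_d) = 0.
Proof. by rewrite /enorm big1 ?sqrtr0 // => j _; rewrite mxE expr2 mulr0. Qed.

Section SampleAgreement.
Context {R : realType} {d : nat} {X : Type} {N n K : nat}.
Context {f : 'rV[R]_d -> X -> R} {M : 'M[R]_N} {eta : nat -> R} {beta : R}.

Lemma local_run_ext et (Di Di' : 'I_n -> X) i (s : selection N n K) w :
  (forall k, Di (s (i, k)) = Di' (s (i, k))) ->
  local_run f beta et Di i s w = local_run f beta et Di' i s w.
Proof.
move=> DiE; rewrite /local_run.
apply: (congr1 (fun F => (foldl F (w, w) (enum 'I_K)).1)).
by apply: funext => p; apply: funext => k; rewrite DiE.
Qed.

Context {D Dt : 'I_N -> 'I_n -> X} {i0 : 'I_N} {j0 : 'I_n}.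
Hypothesis D_Dt : forall i j, (i, j) != (i0, j0) -> D i j = Dt i j.

Lemma round_ext t (s : selection N n K) W :
  avoids i0 j0 s -> round f M eta beta D t s W = round f M eta beta Dt t s W.
Proof.
move=> /forallP s_avoids; apply: funext => i; apply: eq_bigr => l _; congr (_ *: _).
apply: local_run_ext => k; apply: D_Dt.
by apply: contraNneq (s_avoids k) => -[-> ->].
Qed.

Lemma run_from_ext t W (ss : seq (selection N n K)) :
  all (avoids i0 j0) ss ->
  run_from f M eta beta D t W ss = run_from f M eta beta Dt t W ss.
Proof.
elim: ss t W => [//|s ss IH] t W /andP[s_avoids ss_avoid] /=.
by rewrite round_ext // IH.
Qed.

Lemma wbar_ext w0 t (ss : seq (selection N n K)) :
  all (avoids i0 j0) (take t ss) ->
  wbar f M eta beta D w0 t ss = wbar f M eta beta Dt w0 t ss.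
Proof. by move=> ss_avoid; rewrite /wbar run_from_ext. Qed.

Lemma wbar_gap_neq0_hit w0 {L t0 : nat} (t0_le_L : (t0 <= L)%N)
    (o : L.-tuple (selection N n K)) :
  enorm (wbar f M eta beta D w0 t0 o - wbar f M eta beta Dt w0 t0 o) != 0 ->
  [exists t : 'I_t0, tnth o (widen_ord t0_le_L t) \in [predC avoids i0 j0]].
Proof.
apply: contraR => /existsPn avoid_all; apply/eqP.
rewrite wbar_ext ?subrr ?enorm0 //.
by apply: (all_take_tnth o t0_le_L) => t; have := avoid_all t; rewrite !inE negbK.
Qed.

Lemma Pr_wbar_gap_neq0 w0 {L t0 : nat} (t0_le_L : (t0 <= L)%N) : (0 < n)%N ->
  Pr [predC fun o : L.-tuple (selection N n K) =>
         enorm (wbar f M eta beta D w0 t0 o - wbar f M eta beta Dt w0 t0 o) == 0]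
  <= t0%:R * (1 - ((n%:R - 1) / n%:R) ^+ K) :> R.
Proof.
move=> n_gt0.
pose E (t : 'I_t0) := [pred o : L.-tuple (selection N n K) |
                       tnth o (widen_ord t0_le_L t) \in [predC avoids i0 j0]].
apply: le_trans (Pr_le_sum _ E _) _; first exact: wbar_gap_neq0_hit.
rewrite (eq_bigr (fun _ => 1 - ((n%:R - 1) / n%:R) ^+ K)) => [|t _].
  by rewrite sumr_const card_ord mulr_natl.
rewrite Pr_tnth_in Pr_predC ?Pr_avoids //.
by apply/card_gt0P; exists [ffun=> Ordinal n_gt0].
Qed.

End SampleAgreement.

Theorem lemmaA4 (R : realType) (d : nat) (X : Type) (N n K T t0 : nat)
  (f : 'rV[R]_d -> X -> R) (B : R)
  (adj : rel 'I_N) (M : 'M[R]_N) (eta : nat -> R) (beta : R)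
  (w0 : 'I_N -> 'rV[R]_d) (D Dt : 'I_N -> 'I_n -> X) :
  (0 < N)%N -> (0 < n)%N ->
  (* the communication graph and the mixing matrix *)
  symmetric adj -> irreflexive adj ->
  M^T = M ->
  (forall i j, M i j != 0 -> (i == j) || adj i j) ->
  (forall x : 'cV[R]_N, (1%:M - M) *m x = 0 <-> exists c : R, x = c *: const_mx 1) ->
  (forall x : 'cV[R]_N, (x^T *m M *m x) 0 0 <= (x^T *m x) 0 0) ->
  (forall x : 'cV[R]_N, x != 0 -> - (x^T *m x) 0 0 < (x^T *m M *m x) 0 0) ->
  (* the loss: nonnegative, bounded, B-Lipschitz *)
  (forall w x, 0 <= f w x) ->
  has_ubound [set f p.1 p.2 | p in [set: 'rV[R]_d * X]] ->
  (forall x w v, `|f w x - f v x| <= B * enorm (w - v)) ->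
  (* D and Dt differ in (at most) a single example *)
  (exists (i0 : 'I_N) (j0 : 'I_n),
     forall i j, (i, j) != (i0, j0) -> D i j = Dt i j) ->
  (t0 <= n)%N ->
  forall Xi : X,
  let Om := ((maxn T t0).-tuple (selection N n K))%type in
  let wb := fun t (o : Om) => wbar f M eta beta D w0 t o in
  let vb := fun t (o : Om) => wbar f M eta beta Dt w0 t o in
  let delta := fun t (o : Om) => enorm (wb t o - vb t o) in
  Exp (fun o : Om => `|f (wb T o) Xi - f (vb T o) Xi|)
  <= t0%:R * sup [set f p.1 p.2 | p in [set: 'rV[R]_d * X]]
       * (1 - ((n%:R - 1) / n%:R) ^+ K)
     + B * CondExp (delta T) (fun o : Om => delta t0 o == 0).
Proof.
(* Neither the mixing matrix nor [t0 <= n] plays any role in the bound. *)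
move=> _ n_gt0 _ _ _ _ _ _ _ f_ge0 f_ub f_lip [i0 [j0 D_Dt]] _ Xi /=.
set wb := wbar f M eta beta D w0; set vb := wbar f M eta beta Dt w0.
set U := sup _.
have f_le_U w x : f w x <= U by apply: (ub_le_sup f_ub); exists (w, x).
have U_ge0 : 0 <= U := le_trans (f_ge0 0 Xi) (f_le_U 0 Xi).
pose good (o : (maxn T t0).-tuple (selection N n K)) := enorm (wb t0 o - vb t0 o) == 0.
pose h (o : (maxn T t0).-tuple (selection N n K)) := B * enorm (wb T o - vb T o).
apply: le_trans (Exp_le_Pr_CondExp _ h good U _ _ _) _.
- move=> o _; have := f_ge0 (wb T o) Xi; have := f_ge0 (vb T o) Xi.
  have := f_le_U (wb T o) Xi; have := f_le_U (vb T o) Xi.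
  rewrite ler_norml; lra.
- by move=> o _; apply: f_lip.
- by move=> o _; apply: le_trans (normr_ge0 _) (f_lip _ _ _).
rewrite CondExpZl lerD2r [t0%:R * U]mulrC -mulrA ler_wpM2l //.
exact: (Pr_wbar_gap_neq0 D_Dt w0 (leq_maxr T t0) n_gt0).
Qed.
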